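(* Let $G$ be a graph and $v$ a vertex of $G$ of degree $1$. Then $G-v$ (delete $v$ and its incident edge) is strongly EFX-orientable if and only if $G$ is strongly EFX-orientable.
   Context: All graphs are finite and simple. For a graph $G=(V,E)$ and $v\in V$, $E(v)$ is the set of edges incident to $v$. A graphical instance on $G$ assigns to each vertex $v$ a valuation $f_v:2^E\to\mathbb{R}_{\ge 0}$ that is monotone ($A\subseteq B\Rightarrow f_v(A)\le f_v(B)$) and satisfies $f_v(X)=f_v(X\cap E(v))$ for all $X\subseteq E$. An orientation of $G$ chooses for each edge one of its endpoints as its head; vertex $v$ receives the bundle $X_v$ of edges whose head is $v$. The orientation is EFX if for all $u,v\in V$ and every $g\in X_v$, $f_u(X_u)\ge f_u(X_v\setminus\{g\})$. A graph $G$ is strongly EFX-orientable if for every graphical instance on $G$ there exists an EFX orientation. *)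

From HB Require Import structures.
From mathcomp Require Import all_boot all_order all_algebra.
From mathcomp Require Import reals.
Set Implicit Arguments. Unset Strict Implicit. Unset Printing Implicit Defensive.
Import Order.TTheory GRing.Theory Num.Theory.
Local Open Scope ring_scope.

(* A (finite, simple) graph is given by a vertex finType T and an adjacency
   relation adj : rel T (assumed symmetric and irreflexive where needed).
   Edges are the 2-element sets {x, y} with adj x y. *)
Section Graphs.
Variables (T : finType) (adj : rel T).

Definition is_edge (e : {set T}) : bool :=
  [exists x, exists y, adj x y && (e == [set x; y])].

Definition edge := {e : {set T} | is_edge e}.

Definition inc (v : T) : {set edge} := [set e : edge | v \in val e].

Variable R : realType.

Definition valuation_of (v : T) (f : {set edge} -> R) : Prop :=
  (forall X, 0 <= f X) /\
  (forall A B : {set edge}, A \subset B -> f A <= f B) /\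
  (forall X, f X = f (X :&: inc v)).

Definition graphical_instance (f : T -> {set edge} -> R) : Prop :=
  forall v, valuation_of v (f v).

Definition orientation (head : edge -> T) : Prop :=
  forall e, head e \in val e.

Definition bundle (head : edge -> T) (u : T) : {set edge} :=
  [set e | head e == u].

Definition EFX (f : T -> {set edge} -> R) (head : edge -> T) : Prop :=
  forall u w (g : edge), g \in bundle head w ->
    f u (bundle head w :\ g) <= f u (bundle head u).

Definition strongly_EFX_orientable : Prop :=
  forall f, graphical_instance f ->
    exists head, orientation head /\ EFX f head.

End Graphs.

Definition del_vertex (T : finType) (adj : rel T) (v : T) : rel {x : T | x != v} :=
  fun x y => adj (val x) (val y).
Arguments del_vertex {T} adj v.

From HB Require Import structures.
From mathcomp Require Import all_boot all_order all_algebra.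
From mathcomp Require Import reals.
Set Implicit Arguments. Unset Strict Implicit. Unset Printing Implicit Defensive.
Import Order.TTheory GRing.Theory Num.Theory.
Local Open Scope ring_scope.

(* The edges of G - v are exactly the edges of G avoiding v.  Hence an
   instance on G - v extends to G by giving v the zero valuation, and an EFX
   orientation of G restricts to one of G - v (no edge of G - v points to v).
   Conversely, an instance on G restricts to G - v; orient the edges of G - v
   by an EFX orientation there and the pendant edge towards v.  Then v owns a
   single edge, so nobody envies it up to any good, and v's valuation only
   sees the pendant edge, which lies in nobody else's bundle. *)

Section DeleteVertex.
Variables (T : finType) (adj : rel T) (v : T) (R : realType).
Local Notation V' := {x : T | x != v}.
Local Notation adj' := (del_vertex adj v).
Local Notation E := (edge adj).
Local Notation E' := (edge adj').

Lemma is_edge_lift (e' : E') : is_edge adj [set val x | x in val e'].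
Proof.
case: e' => /= A /existsP [x /existsP [y /andP [adj_xy /eqP ->]]].
apply/existsP; exists (val x); apply/existsP; exists (val y).
by rewrite (adj_xy : adj (val x) (val y)) /= imsetU1 imset_set1.
Qed.

Definition lift_edge (e' : E') : E := exist (is_edge adj) _ (is_edge_lift e').

Lemma mem_lift_edge (x : V') e' : (val x \in val (lift_edge e')) = (x \in val e').
Proof. by rewrite mem_imset //; exact: val_inj. Qed.

Lemma notin_lift_edge e' : v \notin val (lift_edge e').
Proof. by apply/imsetP => -[x _ vx]; move: (valP x); rewrite -vx eqxx. Qed.

Lemma lift_edge_inj : injective lift_edge.
Proof.
move=> e1 e2 /(f_equal val) /= /(imset_inj val_inj) e12; exact: val_inj.
Qed.

Lemma lift_edge_onto (e : E) : v \notin val e -> exists e', lift_edge e' = e.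
Proof.
case: e => A edgeA /= vNA.
have /existsP [x /existsP [y /andP [adj_xy /eqP defA]]] := edgeA.
rewrite defA !inE negb_or ![v == _]eq_sym in vNA; case/andP: vNA => xv yv.
have edge' : is_edge adj' [set (exist _ x xv : V'); exist _ y yv].
  by apply/existsP; exists (exist _ x xv); apply/existsP; exists (exist _ y yv);
     rewrite /del_vertex /= adj_xy eqxx.
by exists (exist (is_edge adj') _ edge'); apply: val_inj; rewrite /= imsetU1 imset_set1 defA.
Qed.

Lemma lift_edgeP (e : E) :
  reflect (exists e', lift_edge e' = e) (v \notin val e).
Proof.
apply: (iffP idP); first exact: lift_edge_onto.
by case=> e' <-; exact: notin_lift_edge.
Qed.

Lemma imset_lift_edgeI_inc (X : {set E'}) (x : V') :
  lift_edge @: (X :&: inc adj' x) = lift_edge @: X :&: inc adj (val x).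
Proof.
apply/setP => e; apply/imsetP/setIP.
- case=> e' /setIP [Xe' xe'] ->; split; first exact: imset_f.
  by rewrite inE mem_lift_edge; rewrite inE in xe'.
- case=> /imsetP [e' Xe' ->] xe; exists e' => //.
  by rewrite !inE Xe' -mem_lift_edge; rewrite inE in xe.
Qed.

Lemma imset_lift_edgeI_inc_v (X : {set E'}) :
  lift_edge @: X :&: inc adj v = set0.
Proof.
apply/setP => e; rewrite !inE; apply/negbTE/andP => -[/imsetP [e' _ ->]].
by rewrite (negbTE (notin_lift_edge e')).
Qed.

Lemma imset_lift_edgeD1 (X : {set E'}) g :
  lift_edge @: X :\ lift_edge g = lift_edge @: (X :\ g).
Proof.
apply/setP => e; apply/setD1P/imsetP.
- case=> eNg /imsetP [e' Xe' ee']; exists e' => //.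
  by rewrite !inE Xe' -(inj_eq lift_edge_inj) -ee' eNg.
- case=> e' /setD1P [e'Ng Xe'] ->; split; last exact: imset_f.
  by rewrite (inj_eq lift_edge_inj).
Qed.

Lemma preimset_lift_edge_inc (x : V') : lift_edge @^-1: inc adj (val x) = inc adj' x.
Proof. by apply/setP => e'; rewrite !inE mem_lift_edge. Qed.

Lemma preimset_lift_edgeD1 (X : {set E}) g :
  lift_edge @^-1: (X :\ lift_edge g) = lift_edge @^-1: X :\ g.
Proof. by apply/setP => e'; rewrite !inE (inj_eq lift_edge_inj). Qed.

Definition extend_instance (f' : V' -> {set E'} -> R) (x : T) (X : {set E}) : R :=
  if insub x is Some x' then f' x' (lift_edge @^-1: X) else 0.

Lemma extend_instance_graphical f' :
  graphical_instance f' -> graphical_instance (extend_instance f').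
Proof.
move=> f'G x; rewrite /extend_instance; case: insubP => [x' _ <-|_]; last first.
  by split=> [//|]; split=> [A B _|//].
have [f'0 [f'mono f'loc]] := f'G x'; split=> [X|]; first exact: f'0.
split=> [A B AB|X]; first exact/f'mono/preimsetS.
by rewrite preimsetI preimset_lift_edge_inc -f'loc.
Qed.

Section RestrictOrientation.
Variable head : E -> T.
Hypothesis head_orientation : orientation head.

Lemma lift_edge_head_neq e' : head (lift_edge e') != v.
Proof. by apply: contraNneq (notin_lift_edge e') => <-; exact: head_orientation. Qed.

Definition restrict_head (e' : E') : V' :=
  exist (fun x => x != v) _ (lift_edge_head_neq e').

Lemma restrict_head_orientation : orientation restrict_head.
Proof. by move=> e'; rewrite -mem_lift_edge; exact: head_orientation. Qed.

Lemma preimset_lift_edge_bundle (w' : V') :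
  lift_edge @^-1: bundle head (val w') = bundle restrict_head w'.
Proof. by apply/setP => e'; rewrite !inE -val_eqE. Qed.

End RestrictOrientation.

Lemma strongly_EFX_orientable_del_vertex :
  strongly_EFX_orientable adj R -> strongly_EFX_orientable adj' R.
Proof.
move=> EFX_G f' f'G.
have [head [head_or head_EFX]] := EFX_G _ (extend_instance_graphical f'G).
exists (restrict_head head_or); split; first exact: restrict_head_orientation.
move=> u' w' g'; rewrite -preimset_lift_edge_bundle inE => g'w'.
move: (head_EFX (val u') (val w') _ g'w').
by rewrite /extend_instance !valK preimset_lift_edgeD1 !preimset_lift_edge_bundle.
Qed.

Definition restrict_instance (f : T -> {set E} -> R) (x : V') (X : {set E'}) : R :=
  f (val x) (lift_edge @: X).

Lemma restrict_instance_graphical f :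
  graphical_instance f -> graphical_instance (restrict_instance f).
Proof.
move=> fG x; have [f0 [fmono floc]] := fG (val x).
split=> [X|]; first exact: f0.
split=> [A B AB|X]; first exact/fmono/imsetS.
by rewrite /restrict_instance imset_lift_edgeI_inc -floc.
Qed.

Section ExtendOrientation.
Variable head' : E' -> V'.
Hypothesis head'_orientation : orientation head'.

Definition extend_head (e : E) : T :=
  if [pick e' | lift_edge e' == e] is Some e' then val (head' e') else v.

Lemma extend_head_lift e' : extend_head (lift_edge e') = val (head' e').
Proof.
rewrite /extend_head; case: pickP => [e'' /eqP /lift_edge_inj -> //|/(_ e')].
by rewrite eqxx.
Qed.

Lemma extend_head_v (e : E) : v \in val e -> extend_head e = v.
Proof.
rewrite /extend_head; case: pickP => [e' /eqP <-|//].
by rewrite (negbTE (notin_lift_edge e')).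
Qed.

Lemma extend_head_orientation : orientation extend_head.
Proof.
move=> e; have [/lift_edgeP [e' <-]|ve] := boolP (v \notin val e).
  by rewrite extend_head_lift mem_lift_edge; exact: head'_orientation.
by rewrite extend_head_v //; move: ve; rewrite negbK.
Qed.

Lemma bundle_extend_head (w : V') :
  bundle extend_head (val w) = lift_edge @: bundle head' w.
Proof.
apply/setP => e; have [/lift_edgeP [e' <-]|ve] := boolP (v \notin val e).
  by rewrite mem_imset ?inE ?extend_head_lift ?val_eqE //; exact: lift_edge_inj.
rewrite negbK in ve; rewrite inE extend_head_v // eq_sym (negbTE (valP w)).
by apply/esym/negP => /imsetP [e' _ ee']; rewrite ee' (negbTE (notin_lift_edge e')) in ve.
Qed.

Lemma bundle_extend_head_v : bundle extend_head v = [set e : E | v \in val e].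
Proof.
apply/setP => e; rewrite !inE; have [/lift_edgeP [e' <-]|ve] := boolP (v \notin val e).
  by rewrite extend_head_lift (negbTE (valP (head' e'))) (negbTE (notin_lift_edge e')).
by rewrite negbK in ve; rewrite extend_head_v ?eqxx.
Qed.

End ExtendOrientation.

Lemma edges_at_deg_le1 : symmetric adj -> (#|[set w | adj v w]| <= 1)%N ->
  forall e1 e2 : E, v \in val e1 -> v \in val e2 -> e1 = e2.
Proof.
move=> adj_sym /card_le1_eqP nbr_uniq.
suff other_end (e : E) :
    v \in val e -> exists2 w, adj v w & val e = [set v; w].
  move=> e1 e2 /other_end [w1 vw1 e1v] /other_end [w2 vw2 e2v]; apply: val_inj.
  by rewrite e1v e2v (nbr_uniq w1 w2) ?inE.
case: e => A /= /existsP [x /existsP [y /andP [adj_xy /eqP ->]]].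
rewrite !inE => /orP [/eqP ->|/eqP ->]; first by exists y.
by exists x; rewrite 1?adj_sym // setUC.
Qed.

Lemma extend_head_EFX f head' :
  symmetric adj -> (#|[set w | adj v w]| <= 1)%N ->
  graphical_instance f -> EFX (restrict_instance f) head' ->
  EFX f (extend_head head').
Proof.
move=> adj_sym deg_v fG head'_EFX u w g; case: (eqVneq w v) => [-> | wv].
  rewrite bundle_extend_head_v inE => vg.
  have -> : [set e : E | v \in val e] :\ g = set0.
    apply/setP => e; rewrite !inE; apply/negbTE/andP => -[eNg ve].
    by rewrite (edges_at_deg_le1 adj_sym deg_v ve vg) eqxx in eNg.
  by have [_ [fmono _]] := fG u; apply: fmono; exact: sub0set.
pose w' : V' := exist (fun x => x != v) w wv; rewrite -[w]/(val w') bundle_extend_head.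
case/imsetP => g' g'w' ->; rewrite imset_lift_edgeD1.
have [-> | uv] := eqVneq u v.
  have [_ [fmono floc]] := fG v.
  by rewrite floc imset_lift_edgeI_inc_v; apply: fmono; exact: sub0set.
pose u' : V' := exist (fun x => x != v) u uv; rewrite -[u]/(val u') bundle_extend_head.
exact: (head'_EFX u' w' g' g'w').
Qed.

Lemma strongly_EFX_orientable_add_pendant :
  symmetric adj -> (#|[set w | adj v w]| <= 1)%N ->
  strongly_EFX_orientable adj' R -> strongly_EFX_orientable adj R.
Proof.
move=> adj_sym deg_v EFX_G' f fG.
have [head' [head'_or head'_EFX]] := EFX_G' _ (restrict_instance_graphical fG).
exists (extend_head head'); split; first exact: extend_head_orientation.
exact: extend_head_EFX.
Qed.

End DeleteVertex.

Theorem mainTheorem9 (R : realType) (T : finType) (adj : rel T) (v : T) :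
  symmetric adj -> irreflexive adj ->
  #|[set w | adj v w]| = 1%N ->
  (strongly_EFX_orientable (del_vertex adj v) R <->
   strongly_EFX_orientable adj R).
Proof.
move=> adj_sym _ deg_v; split.
- by apply: strongly_EFX_orientable_add_pendant; rewrite ?deg_v.
- exact: strongly_EFX_orientable_del_vertex.
Qed.
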